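(* Let $k\ge 2$ and let $s_k$ and $w_k$ be as in the context. Consider the SLP obtained after the first $k-1$ rounds of $\mathsf{RePair}$ on input $s_k$. Its rules other than the start rule are $X_1\to aa$ and $X_i\to X_{i-1}X_{i-1}$ for $2\le i\le k-1$. Its start rule is $S\to u_1bu_2b\cdots u_{k-1}bu_k$. For each $1\le i\le k$, we have $u_i=X_{k-1}^{q_i}v_i$, where $q_i=\lfloor N_i/2^{k-1}\rfloor$ and $N_i$ is the integer with binary representation $w_k[1:k+i]$; in particular $q_i\ge2$. The word $v_i$ is $$v_i=f_{k-2}(w_k[i+2])f_{k-3}(w_k[i+3])\cdots f_1(w_k[k+i-1])f_0(w_k[k+i]),$$ with $f_0(1)=a$, $f_0(0)=\varepsilon$, and for $j\ge1$, $f_j(1)=X_j$, $f_j(0)=\varepsilon$. In particular, in these first $k-1$ rounds the selected strings never contain the letter $b$.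
   Context: All logarithms are to base 2. A straight-line program (SLP) is a context-free grammar with exactly one production $A\to u$, $u$ a nonempty word over nonterminals and terminals, per nonterminal, with acyclic dependencies, so that it derives a single word. For an SLP, a word $\gamma$ over terminals and nonterminals is a maximal string if $|\gamma|\ge2$, $\gamma$ occurs at least twice without overlap in the right-hand sides, and no strictly longer word occurs at least as many times without overlap in the right-hand sides. $\mathsf{RePair}$ on input $w$ starts with the single rule $S\to w$. In each round it selects a maximal string $\gamma$ with the largest number of non-overlapping occurrences, replaces a largest set of pairwise non-overlapping occurrences of $\gamma$ (chosen from left to right) in the right-hand sides by a fresh nonterminal $X$, and adds $X\to\gamma$. It stops when no maximal string exists. For $k\ge2$, fix a binary de Bruijn sequence $B\in\{0,1\}^*$ of order $\lceil\log k\rceil$ that starts with $1$. It has length $2^{\lceil\log k\rceil}$, and each word of length $\lceil\log k\rceil$ occurs at most once as a factor of $B$. Let $h$ be the homomorphism with $h(0)=01$, $h(1)=10$. Put $w_k=h(B[1:k])$, a binary word of length $2k$ with $w_k[1]=1$. Define $$s_k=a^{w_k[1:k+1]}\,b\,a^{w_k[1:k+2]}\,b\cdots a^{w_k[1:2k-1]}\,b\,a^{w_k},$$ where each prefix $w_k[1:k+i]$ is read as a binary number giving the exponent. Here $w[i:j]$ denotes the factor from position $i$ to position $j$. *)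

From mathcomp Require Import all_boot.
Set Implicit Arguments. Unset Strict Implicit. Unset Printing Implicit Defensive.

(* inl true = terminal a, inl false = terminal b, inr i = nonterminal X_i. *)
Definition sym : Type := (bool + nat)%type.
Definition ta : sym := inl true.
Definition tb : sym := inl false.
Definition NT (i : nat) : sym := inr i.

(* An SLP is a pair (start rhs, rules); the j-th element (0-based) of the
   rules list is the right-hand side of nonterminal X_(j+1). *)
Definition slp : Type := (seq sym * seq (seq sym))%type.
Definition rhss (G : slp) : seq (seq sym) := G.1 :: G.2.

Definition nonoverlap_occs (g w : seq sym) (ps : seq nat) : Prop :=
  sorted (fun p q => p + size g <= q) ps /\
  (forall p, p \in ps -> take (size g) (drop p w) = g).

Definition max_nov (g w : seq sym) (n : nat) : Prop :=
  (exists ps, nonoverlap_occs g w ps /\ size ps = n) /\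
  (forall ps, nonoverlap_occs g w ps -> size ps <= n).

(* n is the largest number of non-overlapping occurrences of g in the
   right-hand sides of G (occurrences in distinct rhs never overlap). *)
Definition occ_count (G : slp) (g : seq sym) (n : nat) : Prop :=
  exists ns : seq nat,
    size ns = size (rhss G) /\
    (forall j, j < size ns -> max_nov g (nth [::] (rhss G) j) (nth 0 ns j)) /\
    sumn ns = n.

Definition maximal_string (G : slp) (g : seq sym) (n : nat) : Prop :=
  2 <= size g /\ occ_count G g n /\ 2 <= n /\
  (forall g' n', size g < size g' -> occ_count G g' n' -> n' < n).

Fixpoint repl_fuel (fuel : nat) (g : seq sym) (X : sym) (w : seq sym) : seq sym :=
  match fuel, w with
  | 0, _ => w
  | _, [::] => [::]
  | f.+1, c :: w' =>
      if (0 < size g) && (take (size g) w == g)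
      then X :: repl_fuel f g X (drop (size g) w)
      else c :: repl_fuel f g X w'
  end.
Definition repl (g : seq sym) (X : sym) (w : seq sym) : seq sym :=
  repl_fuel (size w) g X w.

Definition repair_step (G G' : slp) : Prop :=
  exists g n,
    maximal_string G g n /\
    (forall g' n', maximal_string G g' n' -> n' <= n) /\
    G' = (repl g (NT (size G.2).+1) G.1,
          rcons [seq repl g (NT (size G.2).+1) r | r <- G.2] g).

(* G' is obtained from G after n rounds of RePair (any tie-breaking). *)
Fixpoint repair_run (n : nat) (G G' : slp) : Prop :=
  match n with
  | 0 => G' = G
  | n'.+1 => exists G1, repair_step G G1 /\ repair_run n' G1 G'
  end.

Definition repair_init (w : seq sym) : slp := (w, [::]).

Definition is_deBruijn (m : nat) (B : seq bool) : Prop :=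
  size B = 2 ^ m /\
  forall i j, i < j -> j + m <= size B ->
    take m (drop i B) <> take m (drop j B).

Definition hmorph (c : bool) : seq bool := if c then [:: true; false] else [:: false; true].

Definition wk (k : nat) (B : seq bool) : seq bool := flatten (map hmorph (take k B)).

Definition binval (s : seq bool) : nat := foldl (fun acc (c : bool) => acc.*2 + nat_of_bool c) 0 s.

Definition Nk (k : nat) (B : seq bool) (i : nat) : nat := binval (take (k + i) (wk k B)).

Definition sk (k : nat) (B : seq bool) : seq sym :=
  flatten [seq nseq (Nk k B i) ta ++ [:: tb] | i <- iota 1 (k - 1)] ++ nseq (Nk k B k) ta.

Definition fsym (j : nat) (c : bool) : seq sym :=
  if c then (if j == 0 then [:: ta] else [:: NT j]) else [::].

Definition qk (k : nat) (B : seq bool) (i : nat) : nat := Nk k B i %/ 2 ^ (k - 1).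

(* v_i = f_(k-2)(w[i+2]) ... f_0(w[k+i]), positions 1-based *)
Definition vk (k : nat) (B : seq bool) (i : nat) : seq sym :=
  flatten [seq fsym (k + i - t) (nth false (wk k B) t.-1) | t <- iota (i + 2) (k - 1)].

Definition uk (k : nat) (B : seq bool) (i : nat) : seq sym :=
  nseq (qk k B i) (NT (k - 1)) ++ vk k B i.

Definition expected_start (k : nat) (B : seq bool) : seq sym :=
  flatten [seq uk k B i ++ [:: tb] | i <- iota 1 (k - 1)] ++ uk k B k.

Definition expected_rules (k : nat) : seq (seq sym) :=
  mkseq (fun j => if j == 0 then [:: ta; ta] else [:: NT j; NT j]) (k - 1).

(* After r rounds the rules are X_j -> X_(j-1) X_(j-1) for j <= r, and every run
   a^N of s_k has become X_r^(N div 2^r) followed by the r low-order bits of N, the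
   bit of weight 2^j being spelled X_j (or a for j = 0).  The pair X_r X_r then
   occurs W = sum_i N_i div 2^(r+1) >= 2^k times without overlap, whereas the
   grammar has fewer than W symbols other than X_r and fewer than 3W copies of X_r.
   Hence any other string of length >= 2 occurs fewer than W times: occurrences are
   disjoint, so a string containing some other symbol is bounded by the number of
   such symbols, and X_r^m with m >= 3 uses three copies of X_r per occurrence.  So
   RePair must replace X_r X_r, and greedy replacement halves each run of X_r and
   leaves its parity as the next bit. *)

From Pilot Require Import Defs.
From mathcomp Require Import all_boot zify.
From Stdlib Require Import Classical.
Set Implicit Arguments. Unset Strict Implicit. Unset Printing Implicit Defensive.

Section GreedyReplacement.
Variables (g : seq sym) (X : sym).
Hypothesis g_nonempty : 0 < size g.

Lemma repl_fuel_enough f1 f2 w : size w <= f1 -> size w <= f2 ->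
  repl_fuel f1 g X w = repl_fuel f2 g X w.
Proof.
elim: f1 f2 w => [|f1 IH] [|f2] [|c w] //= le1 le2.
rewrite g_nonempty /=; case: ifP => _; congr (_ :: _); apply: IH;
  rewrite ?size_drop /=; lia.
Qed.

Lemma repl_match w : take (size g) w = g ->
  repl g X w = X :: repl g X (drop (size g) w).
Proof.
case: w => [|c w] gw; first by move: g_nonempty; rewrite -gw.
rewrite /repl /= g_nonempty gw eqxx /=; congr (_ :: _).
by apply: repl_fuel_enough; rewrite size_drop /=; lia.
Qed.

Lemma repl_nomatch c w : take (size g) (c :: w) != g ->
  repl g X (c :: w) = c :: repl g X w.
Proof. by move=> gw; rewrite /repl /= (negbTE gw) andbF. Qed.

Lemma count_repl w : X \notin g ->
  exists2 ps, nonoverlap_occs g w ps & count_mem X (repl g X w) = size ps + count_mem X w.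
Proof.
have shift d x s : path (fun p q => p + size g <= q) x s ->
    path (fun p q => p + size g <= q) (d + x) [seq d + p | p <- s].
  by elim: s x => [|y s IH] x //= /andP [xy ys]; rewrite IH // andbT; lia.
move=> /count_memPn Xg; rewrite /repl; move: (size w) => f.
elim: f w => [|f IH] [|c w] /=; try by exists [::].
rewrite g_nonempty /=; case: ifP => [/eqP gw|_].
  have [ps [ps_sorted ps_occ] cnt] := IH (drop (size g) (c :: w)).
  exists (0 :: [seq size g + p | p <- ps]); last first.
    have cnt_w : count_mem X (c :: w) = count_mem X (drop (size g) (c :: w)).
      by rewrite -{1}(cat_take_drop (size g) (c :: w)) gw count_cat Xg.
    by move: cnt_w; rewrite /= eqxx cnt size_map => ->; rewrite addnA add1n.
  split.
    case: ps ps_sorted {ps_occ cnt} => //= p ps /(shift (size g)) ->.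
    by rewrite andbT; lia.
  move=> p; rewrite inE => /orP [/eqP -> | /mapP [p' /ps_occ occ ->]].
    by rewrite drop0.
  by rewrite addnC -drop_drop.
have [ps [ps_sorted ps_occ] cnt] := IH w.
exists [seq p.+1 | p <- ps]; last by rewrite /= cnt size_map addnCA.
split; last by move=> p /mapP [p' /ps_occ occ ->].
by case: ps ps_sorted {ps_occ cnt} => //= p ps /(shift 1).
Qed.

End GreedyReplacement.

Arguments repl : simpl never.

Section PairReplacement.
Variables (Y X : sym).
Local Notation R := (repl [:: Y; Y] X).

Lemma repl_pair_YY w : R (Y :: Y :: w) = X :: R w.
Proof. by rewrite repl_match /= ?drop0 ?take0. Qed.

Lemma repl_pair_cons c w : c != Y -> R (c :: w) = c :: R w.
Proof. by move=> cY; rewrite repl_nomatch //= eqseq_cons (negbTE cY). Qed.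

Lemma repl_pair_catl u w : Y \notin u -> R (u ++ w) = u ++ R w.
Proof.
elim: u => [|c u IH] //=; rewrite inE negb_or eq_sym => /andP [cY uY].
by rewrite repl_pair_cons // IH.
Qed.

Lemma repl_pair_nseq q w : ohead w != Some Y ->
  R (nseq q Y ++ w) = nseq q./2 X ++ nseq (odd q) Y ++ R w.
Proof.
move=> wY; have RYw : R (Y :: w) = Y :: R w.
  case: w wY => [|c w] cY; rewrite [LHS]repl_nomatch //=.
    by apply/eqP => /(congr1 size).
  by apply: contraNneq cY => -[->].
by elim/ltn_ind: q => -[|[|q]] IH //=; rewrite repl_pair_YY IH // negbK.
Qed.

End PairReplacement.

Lemma count_nonoverlap_occs (P : pred sym) g w ps : nonoverlap_occs g w ps ->
  count P g * size ps <= count P w.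
Proof.
case=> ps_sorted ps_occ.
have count_drop n l : count P (drop n l) <= count P l.
  by rewrite -{2}(cat_take_drop n l) count_cat leq_addl.
suff bound s : all (leq s) ps -> count P g * size ps <= count P (drop s w).
  by rewrite -[w]drop0; apply: bound; apply/allP.
elim: ps ps_sorted ps_occ s => [|p ps IH] ps_sorted ps_occ s /=; first by rewrite muln0.
case/andP => sp _.
have ps_after : all (leq (p + size g)) ps.
  by apply: (order_path_min (leT := fun p q => p + size g <= q)) => // x y z; lia.
have split_p : count P (drop p w) = count P g + count P (drop (p + size g) w).
  rewrite -{1}(cat_take_drop (size g) (drop p w)) count_cat ps_occ ?mem_head //.
  by rewrite drop_drop [size g + p]addnC.
apply: leq_trans (count_drop (p - s) _).
rewrite drop_drop subnK // split_p mulnS leq_add2l.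
apply: IH (path_sorted ps_sorted) _ _ ps_after => q q_ps.
by apply: ps_occ; rewrite inE q_ps orbT.
Qed.

Lemma count_occ_count (P : pred sym) G g n : occ_count G g n ->
  count P g * n <= count P (flatten (rhss G)).
Proof.
case=> ns [size_ns [ns_max <-]].
elim: (rhss G) ns size_ns ns_max => [|r rs IH] [|m ns] //=; first by rewrite muln0.
move=> [size_ns] ns_max.
rewrite count_cat mulnDr; apply: leq_add; last first.
  by apply: IH => // j; apply: (ns_max j.+1).
have [[ps [occs /= <-]] _] := ns_max 0 isT; exact: count_nonoverlap_occs occs.
Qed.

Lemma occ_count_start G g ps C : occ_count G g C -> nonoverlap_occs g G.1 ps ->
  size ps <= C.
Proof.
case=> [[|m ns]] [size_ns [ns_max <-]] // occs.
by have [_ /(_ ps occs)] := ns_max 0 isT; rewrite /= => /leq_trans; apply; apply: leq_addr.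
Qed.

Lemma max_nov_exists g w : 0 < size g -> exists n, max_nov g w n.
Proof.
move=> g_nonempty.
have : forall ps, nonoverlap_occs g w ps -> size ps <= size w.
  move=> ps /(count_nonoverlap_occs predT); rewrite !count_predT.
  by apply: leq_trans; rewrite leq_pmull.
elim: (size w) => [|b IH] bounded.
  exists 0; split; first by exists [::].
  by move=> ps /bounded.
have [[ps [occs size_ps]]|none] :=
  classic (exists ps, nonoverlap_occs g w ps /\ size ps = b.+1).
  by exists b.+1; split; [exists ps | move=> ps' /bounded].
apply: IH => ps occs; have := bounded ps occs; rewrite leq_eqVlt ltnS.
by case/orP => // /eqP size_ps; case: none; exists ps.
Qed.

Lemma max_nov_unique g w n1 n2 : max_nov g w n1 -> max_nov g w n2 -> n1 = n2.
Proof.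
move=> [[ps1 [occs1 <-]] max1] [[ps2 [occs2 <-]] max2].
by apply/eqP; rewrite eqn_leq max1 ?max2.
Qed.

Lemma occ_count_exists G g : 0 < size g -> exists n, occ_count G g n.
Proof.
move=> g_nonempty; suff [ns [size_ns ns_max]] : exists ns, size ns = size (rhss G) /\
   (forall j, j < size ns -> max_nov g (nth [::] (rhss G) j) (nth 0 ns j)).
  by exists (sumn ns), ns.
elim: (rhss G) => [|r rs [ns [size_ns ns_max]]]; first by exists [::].
have [n r_max] := max_nov_exists r g_nonempty.
by exists (n :: ns); split => /=; [rewrite size_ns | case].
Qed.

Lemma occ_count_unique G g n1 n2 : occ_count G g n1 -> occ_count G g n2 -> n1 = n2.
Proof.
case=> ns1 [size1 [max1 <-]] [ns2 [size2 [max2 <-]]].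
suff -> : ns1 = ns2 by [].
apply: (eq_from_nth (x0 := 0)) => [|i lt_i]; first by rewrite size1 size2.
by apply: max_nov_unique (max1 i lt_i) (max2 i _); rewrite size2 -size1.
Qed.

Definition repair_replace (G : slp) (g : seq sym) : slp :=
  let X := NT (size G.2).+1 in (repl g X G.1, rcons [seq repl g X r | r <- G.2] g).

Section PairChoice.
Variables (G : slp) (Y : sym) (ps : seq nat).
Hypothesis YY_occs : nonoverlap_occs [:: Y; Y] G.1 ps.
Hypothesis two_occs : 1 < size ps.
Hypothesis few_Y : count_mem Y (flatten (rhss G)) < 3 * size ps.
Hypothesis few_others : count (predC1 Y) (flatten (rhss G)) < size ps.

Lemma occ_count_lt g n : occ_count G g n -> 2 <= size g -> g != [:: Y; Y] ->
  n < size ps.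
Proof.
move=> g_occ g2 gYY; have [/all_pred1P g_Y|] := boolP (all (pred1 Y) g).
  have g3 : 2 < size g.
    by rewrite ltn_neqAle g2 andbT; apply: contraNneq gYY => size2; rewrite g_Y -size2.
  have := count_occ_count (pred1 Y) g_occ; rewrite g_Y count_nseq /= eqxx mul1n.
  move=> /leq_ltn_trans /(_ few_Y) lt_Y.
  rewrite -(ltn_pmul2l (isT : 0 < 3)); apply: leq_ltn_trans lt_Y.
  by rewrite leq_mul2r g3 orbT.
case/allPn=> x g_x xY; have g_other : 0 < count (predC1 Y) g.
  by rewrite -has_count; apply/hasP; exists x.
apply: leq_ltn_trans few_others; apply: leq_trans (count_occ_count _ g_occ).
exact: leq_pmull.
Qed.

Lemma pair_maximal_string : exists2 C, maximal_string G [:: Y; Y] C & size ps <= C.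
Proof.
have [C YY_occ] := occ_count_exists G (isT : 0 < size [:: Y; Y]).
have ps_C := occ_count_start YY_occ YY_occs.
exists C => //; split; [by [] | split; [by [] | split; first exact: leq_trans ps_C]].
move=> g n g_longer g_occ; apply: leq_trans ps_C; apply: occ_count_lt g_occ _ _.
  exact: ltnW.
by apply: contraTneq g_longer => ->; rewrite ltnn.
Qed.

Lemma repair_step_pair :
  (exists G1, repair_step G G1) /\
  (forall G1, repair_step G G1 -> G1 = repair_replace G [:: Y; Y]).
Proof.
have [C YY_max ps_C] := pair_maximal_string.
have other_fewer g n : maximal_string G g n -> g != [:: Y; Y] -> n < C.
  by move=> [g2 [g_occ _]] gYY; apply: leq_trans ps_C; apply: occ_count_lt g_occ g2 gYY.
split.
  exists (repair_replace G [:: Y; Y]), [:: Y; Y], C.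
  split=> //; split=> // g n g_max.
  have [g_YY | gYY] := eqVneq g [:: Y; Y]; last exact/ltnW/(other_fewer g n).
  have [_ [YY_occ _]] := YY_max; have [_ [g_occ _]] := g_max.
  by rewrite g_YY in g_occ; rewrite (occ_count_unique g_occ YY_occ).
move=> G1 [g [n [g_max [most ->]]]].
have [-> // | gYY] := eqVneq g [:: Y; Y].
by have := most _ _ YY_max; have := other_fewer g n g_max gYY; lia.
Qed.

End PairChoice.

Lemma repair_run_chain (S : nat -> slp) K :
  (forall r, r < K -> (exists G1, repair_step (S r) G1) /\
                      (forall G1, repair_step (S r) G1 -> G1 = S r.+1)) ->
  forall m r, r + m <= K ->
  (exists G, repair_run m (S r) G) /\ (forall G, repair_run m (S r) G -> G = S (r + m)).
Proof.
move=> chain; elim=> [|m IH] r le_rm_K.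
  by split=> [|G /= ->]; [exists (S r) | rewrite addn0].
have [[G1 step1] step_uniq] := chain r ltac:(lia).
have [[G run] run_uniq] := IH r.+1 ltac:(lia).
split; first by exists G, (S r.+1); rewrite -{1}(step_uniq _ step1).
by move=> G' [G2 [/step_uniq -> /run_uniq ->]]; rewrite addSnnS.
Qed.

(* The symbol that derives a^(2^r) once r rounds have been performed. *)
Definition pow_a (r : nat) : sym := if r == 0 then ta else NT r.

Definition lower_syms (r : nat) : seq sym := map pow_a (iota 0 r).

Fixpoint low_bits (r n : nat) : seq sym :=
  if r is r'.+1 then Defs.fsym r' (odd (n %/ 2 ^ r')) ++ low_bits r' n else [::].

Definition block (r n : nat) : seq sym := nseq (n %/ 2 ^ r) (pow_a r) ++ low_bits r n.

Definition start (r : nat) (ns : seq nat) (l : nat) : seq sym :=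
  flatten [seq block r n ++ [:: tb] | n <- ns] ++ block r l.

Definition rules (r : nat) : seq (seq sym) := mkseq (fun j => [:: pow_a j; pow_a j]) r.

Definition stage (r : nat) (ns : seq nat) (l : nat) : slp := (start r ns l, rules r).

Lemma pow_a_inj : injective pow_a.
Proof. by move=> [|i] [|j] //= [->]. Qed.

Lemma mem_lower_syms m r : (pow_a m \in lower_syms r) = (m < r).
Proof. by rewrite mem_map ?mem_iota //; exact: pow_a_inj. Qed.

Lemma tb_neq_pow_a j : tb != pow_a j.
Proof. by case: j. Qed.

Lemma fsym_pow_a j (c : bool) : Defs.fsym j c = nseq c (pow_a j).
Proof. by case: c; case: j. Qed.

Lemma lower_syms_subS r : {subset lower_syms r <= lower_syms r.+1}.
Proof.
by move=> x /mapP [j]; rewrite mem_iota => lt_jr ->; rewrite mem_lower_syms ltnS ltnW.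
Qed.

Lemma low_bits_sub r n : {subset low_bits r n <= lower_syms r}.
Proof.
elim: r => [|r IH] x //=; rewrite fsym_pow_a mem_cat => /orP [/nseqP [-> _]|/IH].
  by rewrite mem_lower_syms.
exact: lower_syms_subS.
Qed.

Lemma size_low_bits r n : size (low_bits r n) <= r.
Proof.
elim: r => //= r IH; rewrite size_cat fsym_pow_a size_nseq -add1n.
exact: leq_add (leq_b1 _) IH.
Qed.

Lemma rules_sub r : {subset flatten (rules r) <= lower_syms r}.
Proof.
move=> x /flatten_mapP [j]; rewrite mem_iota add0n => lt_jr.
by rewrite !inE orbb => /eqP ->; rewrite mem_lower_syms.
Qed.

Lemma size_rules r : size (flatten (rules r)) = r.*2.
Proof.
elim: r => // r IH.
by rewrite /rules mkseqS flatten_rcons size_cat -/(rules r) IH doubleS addn2.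
Qed.

Lemma start_sub r ns l : {subset start r ns l <= tb :: lower_syms r.+1}.
Proof.
have block_sub n : {subset block r n <= lower_syms r.+1}.
  move=> x; rewrite mem_cat => /orP [/nseqP [-> _]|/low_bits_sub /lower_syms_subS //].
  by rewrite mem_lower_syms.
move=> x; rewrite mem_cat inE => /orP [/flatten_mapP [n _]|/block_sub ->].
  by rewrite mem_cat inE => /orP [/block_sub ->|->]; rewrite ?orbT.
by rewrite orbT.
Qed.

Lemma count_start_pow_a r ns l :
  count_mem (pow_a r) (start r ns l) = sumn [seq n %/ 2 ^ r | n <- ns] + l %/ 2 ^ r.
Proof.
have count_block n : count_mem (pow_a r) (block r n) = n %/ 2 ^ r.
  rewrite count_cat count_nseq /= eqxx mul1n (count_memPn _) ?addn0 //.
  by apply: contraFN (ltnn r) => /low_bits_sub; rewrite mem_lower_syms.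
rewrite count_cat count_block count_flatten -map_comp; congr (sumn _ + _).
apply: eq_map => n /=; rewrite count_cat count_block /= addn0.
by rewrite (negbTE (tb_neq_pow_a r)) addn0.
Qed.

Lemma count_start_other r ns l :
  count (predC1 (pow_a r)) (start r ns l) <= size ns * r.+1 + r.
Proof.
have count_block n : count (predC1 (pow_a r)) (block r n) <= r.
  rewrite count_cat (eq_in_count (a2 := pred0)) ?count_pred0 => [|x /nseqP [-> _]].
    exact: leq_trans (count_size _ _) (size_low_bits r n).
  by rewrite /= eqxx.
rewrite count_cat; apply: leq_add (count_block l); rewrite count_flatten.
elim: ns => //= n ns IH; rewrite mulSn; apply: leq_add IH.
by rewrite count_cat -addn1; apply: leq_add (count_block n) (count_size _ _).
Qed.

Section RoundOnStage.
Variable r : nat.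
Local Notation Y := (pow_a r).
Local Notation R := (repl [:: Y; Y] (pow_a r.+1)).

Lemma repl_block n w : ohead w != Some Y -> R (block r n ++ w) = block r.+1 n ++ R w.
Proof.
move=> wY; rewrite /block -catA repl_pair_nseq; last first.
  case: (low_bits r n) (@low_bits_sub r n) => [|c bs] // bits_sub.
  by apply: contraTneq (bits_sub c (mem_head _ _)) => -[->]; rewrite mem_lower_syms ltnn.
rewrite repl_pair_catl; last first.
  by apply: contraFN (ltnn r) => /low_bits_sub; rewrite mem_lower_syms.
by rewrite /= fsym_pow_a -divn2 -divnMA -expnSr !catA.
Qed.

Lemma repl_start ns l : R (start r ns l) = start r.+1 ns l.
Proof.
rewrite /start; elim: ns => [|n ns IH] /=.
  by rewrite -[block r l]cats0 repl_block ?cats0.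
rewrite -catA -catA repl_block /=; last by rewrite (inj_eq Some_inj) tb_neq_pow_a.
by rewrite repl_pair_cons ?tb_neq_pow_a // IH -!catA.
Qed.

Lemma repl_rules : map R (rules r) = rules r.
Proof.
rewrite -[RHS]map_id; apply/eq_in_map => rhs rhs_in /=.
rewrite -[rhs]cats0 repl_pair_catl //; apply: contraFN (ltnn r) => Y_rhs.
by rewrite -mem_lower_syms; apply: rules_sub; apply/flattenP; exists rhs.
Qed.

Lemma repair_replace_stage ns l :
  repair_replace (stage r ns l) [:: Y; Y] = stage r.+1 ns l.
Proof.
rewrite /repair_replace /= size_mkseq.
have -> : NT r.+1 = pow_a r.+1 by [].
by rewrite repl_start repl_rules /stage /rules mkseqS.
Qed.

End RoundOnStage.

Lemma repair_step_stage r ns l :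
  (forall n, n \in ns -> 2 <= n %/ 2 ^ r) -> 4 <= l %/ 2 ^ r ->
  size ns * r.+1 + 3 * r < sumn [seq n %/ 2 ^ r.+1 | n <- ns] + l %/ 2 ^ r.+1 ->
  (exists G1, repair_step (stage r ns l) G1) /\
  (forall G1, repair_step (stage r ns l) G1 -> G1 = stage r.+1 ns l).
Proof.
move=> ns_big l_big few_others.
have half n : n %/ 2 ^ r.+1 = (n %/ 2 ^ r)./2 by rewrite -divn2 -divnMA -expnSr.
have rules_noY : count_mem (pow_a r) (flatten (rules r)) = 0.
  by apply/count_memPn; apply: contraFN (ltnn r) => /rules_sub; rewrite mem_lower_syms.
have start_noX : pow_a r.+1 \notin start r ns l.
  apply: contraFN (ltnn r.+1) => /start_sub.
  by rewrite inE eq_sym (negbTE (tb_neq_pow_a _)) mem_lower_syms.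
have XY : pow_a r.+1 \notin [:: pow_a r; pow_a r].
  by rewrite !inE orbb (inj_eq pow_a_inj) gtn_eqF.
have [ps YY_occs] := count_repl (isT : 0 < size [:: pow_a r; pow_a r]) (start r ns l) XY.
rewrite repl_start count_start_pow_a (count_memPn start_noX) addn0 => size_ps.
rewrite -(repair_replace_stage r ns l); apply: (@repair_step_pair (stage r ns l) _ _ YY_occs).
- by rewrite -size_ps addnC half ltn_addr //; move: l_big; lia.
- rewrite /= count_cat count_start_pow_a rules_noY addn0 -size_ps mulnDr.
  rewrite -addnS; apply: leq_add; last by rewrite half; move: l_big; lia.
  elim: ns ns_big {few_others size_ps YY_occs start_noX} => //= n ns IH ns_big.
  rewrite mulnDr half; apply: leq_add; first by have := ns_big n (mem_head _ _); lia.
  by apply: IH => m m_ns; apply: ns_big; rewrite inE m_ns orbT.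
- rewrite /= count_cat -size_ps; apply: leq_ltn_trans few_others.
  apply: leq_trans (leq_add (count_start_other r ns l) (count_size _ _)) _.
  by rewrite size_rules -addnA leq_add2l -addnn; lia.
Qed.

Lemma rules_expected k : rules (k - 1) = expected_rules k.
Proof. by apply: eq_mkseq => -[]. Qed.

Lemma sq_lt_exp2 k : k * k < 2 ^ k + k + 3.
Proof.
have double_le_exp2 j : j.+1.*2 <= 2 ^ j.+1.
  by have := ltn_expl j (isT : 1 < 2); rewrite expnS; lia.
elim: k => [|[|k] IH] //; have := double_le_exp2 k; move: IH; rewrite !expnS; nia.
Qed.

Lemma binval_rcons s c : binval (rcons s c) = (binval s).*2 + c.
Proof. by rewrite /binval foldl_rcons. Qed.

Lemma exp2_size_le_binval s : 2 ^ size s <= binval (true :: s).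
Proof.
elim/last_ind: s => // s c IH; rewrite -rcons_cons binval_rcons size_rcons expnS.
by apply: leq_trans (leq_addr _ _); rewrite mul2n leq_double.
Qed.

Lemma odd_binval_div s j : j < size s ->
  odd (binval s %/ 2 ^ j) = nth false s (size s - j.+1).
Proof.
elim/last_ind: s j => // s c IH [|j]; rewrite size_rcons binval_rcons nth_rcons => lt_j.
  by rewrite divn1 oddD odd_double subSS subn0 ltnn eqxx; case: c.
have half_binval : ((binval s).*2 + c) %/ 2 = binval s.
  by rewrite -muln2 divnMDl // divn_small ?addn0 //; case: c.
rewrite expnSr mulnC divnMA half_binval IH // subSS ifT; last by lia.
by congr nth; lia.
Qed.

Lemma size_flatten_hmorph s : size (flatten (map hmorph s)) = (size s).*2.
Proof. by elim: s => //= c s IH; rewrite size_cat IH; case: c. Qed.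

Lemma low_bits_flatten r n : low_bits r n =
  flatten [seq Defs.fsym (r.-1 - t) (odd (n %/ 2 ^ (r.-1 - t))) | t <- iota 0 r].
Proof.
elim: r => //= r ->; rewrite subn0 (iotaDl 1 0) -map_comp; congr (_ ++ flatten _).
by apply: eq_map => t /=; rewrite subnDA subn1.
Qed.

Section RePairOnSk.
Variables (k : nat) (B : seq bool).
Hypotheses (k_ge2 : 2 <= k) (size_B : k <= size B) (B_head : head false B = true).

Lemma size_wk : size (wk k B) = k.*2.
Proof. by rewrite /wk size_flatten_hmorph size_takel. Qed.

Lemma exp2_le_Nk i : 1 <= i <= k -> 2 ^ (k + i - 1) <= Nk k B i.
Proof.
case: B size_B B_head => [|b B'] //= size_B' -> /andP [i_ge1 i_le_k].
rewrite /Nk /wk; case: k k_ge2 size_B' i_le_k => [|k'] //= _ size_B' i_le_k.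
apply: leq_trans (exp2_size_le_binval _); rewrite leq_exp2l // size_takel; first lia.
by rewrite /= size_flatten_hmorph size_takel //; lia.
Qed.

Lemma exp2_le_Nk_iota i : i \in iota 1 (k - 1) -> 2 ^ k <= Nk k B i.
Proof.
rewrite mem_iota => /andP [i_ge1 i_lt]; apply: leq_trans (exp2_le_Nk _); last lia.
by rewrite leq_exp2l //; lia.
Qed.

Lemma sk_stage0 :
  repair_init (sk k B) = stage 0 [seq Nk k B i | i <- iota 1 (k - 1)] (Nk k B k).
Proof.
have block0 n : block 0 n = nseq n ta by rewrite /block expn0 divn1 cats0.
by rewrite /repair_init /stage /start /sk -map_comp block0; congr (flatten _ ++ _, _);
  apply: eq_map => i /=; rewrite block0.
Qed.

Lemma repair_step_sk r : r < k - 1 ->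
  let ns := [seq Nk k B i | i <- iota 1 (k - 1)] in
  (exists G1, repair_step (stage r ns (Nk k B k)) G1) /\
  (forall G1, repair_step (stage r ns (Nk k B k)) G1 -> G1 = stage r.+1 ns (Nk k B k)).
Proof.
move=> lt_r ns.
have ns_big n : n \in ns -> 2 ^ k <= n by case/mapP=> i /exp2_le_Nk_iota + ->.
have l_big : 2 ^ (k + k - 1) <= Nk k B k by apply: exp2_le_Nk; lia.
have div_big n e s : 2 ^ (e + s) <= n -> 2 ^ e <= n %/ 2 ^ s.
  by rewrite leq_divRL ?expn_gt0 // expnD.
have ns_div n s : n \in ns -> s < k -> 2 <= n %/ 2 ^ s.
  move/ns_big => n_big lt_s; apply: (div_big _ 1); apply: leq_trans n_big.
  by rewrite leq_exp2l.
have ns_half n : n \in ns -> 2 <= n %/ 2 ^ r.+1 by move/ns_div; apply; lia.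
apply: repair_step_stage.
- by move=> n /ns_div; apply; lia.
- apply: (div_big _ 2); apply: leq_trans l_big; rewrite leq_exp2l //; lia.
have sum_half : 2 * size ns <= sumn [seq n %/ 2 ^ r.+1 | n <- ns].
  elim: (ns) ns_half => //= n ns' IH ns_half; rewrite mulnS.
  apply: leq_add; first exact: ns_half (mem_head _ _).
  by apply: IH => m m_ns; apply: ns_half; rewrite inE m_ns orbT.
have l_half : 2 ^ k <= Nk k B k %/ 2 ^ r.+1.
  by apply: div_big; apply: leq_trans l_big; rewrite leq_exp2l //; lia.
have := sq_lt_exp2 k; rewrite size_map size_iota in sum_half *.
move: sum_half l_half; set t := 2 ^ k; set S := sumn _; nia.
Qed.

Lemma block_uk i : 1 <= i <= k -> block (k - 1) (Nk k B i) = uk k B i.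
Proof.
move=> /andP [i_ge1 i_le_k].
have size_prefix : size (take (k + i) (wk k B)) = k + i by rewrite size_takel // size_wk; lia.
rewrite /block /uk /qk /pow_a ifF; last by apply/eqP; lia.
congr (_ ++ _); rewrite /vk low_bits_flatten -[i + 2]addn0 iotaDl -map_comp.
congr flatten; apply/eq_in_map => t; rewrite mem_iota add0n => /andP [_ lt_t] /=.
have -> : k + i - (i + 2 + t) = (k - 1).-1 - t by lia.
rewrite /Nk odd_binval_div size_prefix; last lia.
rewrite nth_take; last lia.
by have -> : k + i - ((k - 1).-1 - t).+1 = (i + 2 + t).-1 by lia.
Qed.

Lemma start_expected :
  start (k - 1) [seq Nk k B i | i <- iota 1 (k - 1)] (Nk k B k) = expected_start k B.
Proof.
rewrite /start /expected_start block_uk; last by lia.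
rewrite -map_comp; congr (flatten _ ++ _); apply/eq_in_map => i.
by rewrite mem_iota => /andP [i_ge1 i_lt] /=; rewrite block_uk //; lia.
Qed.

End RePairOnSk.

Theorem mainTheorem4 (k : nat) (B : seq bool) :
  2 <= k ->
  is_deBruijn (up_log 2 k) B ->
  head false B = true ->
  (exists G, repair_run (k - 1) (repair_init (sk k B)) G) /\
  (forall G, repair_run (k - 1) (repair_init (sk k B)) G ->
     G.2 = expected_rules k /\
     G.1 = expected_start k B /\
     (forall i, 1 <= i <= k -> 2 <= qk k B i)).
Proof.
(* In these first rounds the de Bruijn property of B is only used for |B| >= k. *)
move=> k_ge2 [size_B _] B_head.
have k_le_B : k <= size B by rewrite size_B; apply: up_logP.
have [run_exists run_uniq] :=
  repair_run_chain (repair_step_sk k_ge2 k_le_B B_head) (leqnn (0 + (k - 1))).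
rewrite sk_stage0; split=> // G /run_uniq ->; split; first exact: rules_expected.
split; first exact: start_expected.
move=> i i_range; rewrite /qk leq_divRL ?expn_gt0 // -expnS.
by apply: leq_trans (exp2_le_Nk k_ge2 k_le_B B_head i_range); rewrite leq_exp2l //; lia.
Qed.
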